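(* Let $f_1(x)=\frac25x$ for $x<0$ and $f_1(x)=\frac15x$ for $x\ge0$, let $f_2(x)=\frac13x$, and for $\varepsilon>0$ let $\widehat f_{2}(x)=\frac13x+\varepsilon$. Consider the CPLIFSs $\mathcal{F}=\{f_1,f_2\}$ and $\widehat{\mathcal{F}}_\varepsilon=\{f_1,\widehat f_2\}$. Let $s_0$ be the unique $s>0$ with $(1/3)^s+(1/5)^s=1$. Then for every $\varepsilon>0$ the natural dimension of $\widehat{\mathcal{F}}_\varepsilon$ equals $s_0$, while the natural dimension of $\mathcal{F}$ is strictly larger than $s_0$. In particular the natural dimension of $\widehat{\mathcal F}_\varepsilon$ does not converge to that of $\mathcal F$ as $\varepsilon\to0$.
   Context: For a CPLIFS (finite family $\{f_k\}_{k=1}^m$ of continuous piecewise linear contractions of $\mathbb{R}$ with nonzero slopes of absolute value $<1$ and finitely many breaking points), let $I$ be the smallest nonempty compact interval with $f_k(I)\subset I$ for all $k$; if the attractor (the unique nonempty compact $\Lambda=\bigcup_kf_k(\Lambda)$) is a single point $\phi$ (e.g. a common fixed point), set $I=[\phi-\frac12,\phi+\frac12]$. The natural pressure is $\Phi(s)=\limsup_{n\to\infty}\frac1n\log\sum_{(i_1,\dots,i_n)\in[m]^n}|f_{i_1}\circ\dots\circ f_{i_n}(I)|^s$; it is strictly decreasing with $\Phi(0)>0$ and $\Phi(s)\to-\infty$, and the natural dimension is its unique zero. *)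

From HB Require Import structures.
From mathcomp Require Import all_boot all_order all_algebra.
From mathcomp Require Import all_classical all_reals all_analysis.
Set Implicit Arguments. Unset Strict Implicit. Unset Printing Implicit Defensive.
Import Order.TTheory GRing.Theory Num.Theory.
Import numFieldNormedType.Exports.
Local Open Scope classical_set_scope.
Local Open Scope ring_scope.

Section CPLIFS.
Variable R : realType.

Definition invariant_interval (m : nat) (fs : 'I_m -> R -> R) (a b : R) :=
  a <= b /\ forall (k : 'I_m) x, a <= x <= b -> a <= fs k x <= b.

Definition smallest_invariant_interval (m : nat) (fs : 'I_m -> R -> R) (a b : R) :=
  invariant_interval fs a b /\
  forall c d, invariant_interval fs c d -> c <= a /\ b <= d.

Definition is_attractor (m : nat) (fs : 'I_m -> R -> R) (L : set R) :=
  L !=set0 /\ compact L /\ L = \bigcup_(k in [set: 'I_m]) (fs k @` L).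

Definition cplifs_interval (m : nat) (fs : 'I_m -> R -> R) (a b : R) :=
  (exists phi, is_attractor fs [set phi] /\ a = phi - 2^-1 /\ b = phi + 2^-1)
  \/ ((~ exists phi, is_attractor fs [set phi]) /\ smallest_invariant_interval fs a b).

Definition comp_word (m : nat) (fs : 'I_m -> R -> R) (w : seq 'I_m) : R -> R :=
  foldr (fun i g => fs i \o g) id w.

Definition image_length (g : R -> R) (a b : R) : R :=
  sup [set d | exists x y, a <= x <= b /\ a <= y <= b /\ d = `|g x - g y|].

Definition natural_pressure (m : nat) (fs : 'I_m -> R -> R) (a b s : R) : \bar R :=
  limn_esup (fun n : nat =>
    ((n%:R)^-1 * ln (\sum_(w : n.-tuple 'I_m)
                       (image_length (comp_word fs w) a b) `^ s))%:E).

Definition natural_dimension (m : nat) (fs : 'I_m -> R -> R) (d : R) :=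
  exists a b, cplifs_interval fs a b /\
    natural_pressure fs a b d = 0%E /\
    (forall t, natural_pressure fs a b t = 0%E -> t = d).

Definition f1 (x : R) : R := if x < 0 then (2 / 5) * x else (1 / 5) * x.
Definition f2 (x : R) : R := (1 / 3) * x.
Definition f2hat (eps : R) (x : R) : R := (1 / 3) * x + eps.

Definition famF : 'I_2 -> R -> R := fun k => if val k == 0%N then f1 else f2.
Definition famFhat (eps : R) : 'I_2 -> R -> R :=
  fun k => if val k == 0%N then f1 else f2hat eps.

End CPLIFS.

(* If, for every word w, the image |f_w(I)| is comparable up to fixed constants
   to the product r_w of per-map ratios r_i in (0,1), then the sum over words of
   length n of |f_w(I)|^s is comparable to (sum_i r_i^s)^n, so the natural
   pressure is log sum_i r_i^s and the natural dimension is the root of the Moran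
   equation sum_i r_i^s = 1.
   For the perturbed system the interval is I = [0, 3 eps/2], the segment between
   the fixed points of f1 and of f2hat; it lies in [0, +oo), where f1 has slope
   1/5, so |f_w(I)| = (3 eps/2) r_w with ratios {1/5, 1/3} and the dimension is s0.
   For the unperturbed system 0 is a common fixed point, so I = [-1/2, 1/2]
   straddles 0 and the left half, where f1 has slope 2/5, dominates: |f_w(I)| is
   comparable to the product of the ratios {2/5, 1/3}, whose Moran root exceeds
   s0 because 2/5 > 1/5. *)
From HB Require Import structures.
From mathcomp Require Import all_boot all_order all_algebra.
From mathcomp Require Import all_classical all_reals all_analysis.
From mathcomp Require Import lra.
Set Implicit Arguments. Unset Strict Implicit. Unset Printing Implicit Defensive.
Import Order.TTheory GRing.Theory Num.Theory.
Import numFieldNormedType.Exports.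
Local Open Scope classical_set_scope.
Local Open Scope ring_scope.

Lemma sum_tuple_prod (S : comPzSemiRingType) (m n : nat) (F : 'I_m -> S) :
  \sum_(w : n.-tuple 'I_m) \prod_(i <- w) F i = (\sum_i F i) ^+ n.
Proof.
elim: n => [|n IH].
  rewrite (eq_bigr (fun=> 1)); last by move=> w _; rewrite tuple0 big_nil.
  by rewrite sumr_const card_tuple expr0 /= expn0.
rewrite exprS -IH mulr_suml.
rewrite (reindex (fun p : 'I_m * n.-tuple 'I_m => [tuple of p.1 :: p.2])) /=; last first.
  exists (fun t : n.+1.-tuple 'I_m => (thead t, [tuple of behead t])).
    by move=> [i t] _ /=; congr pair; apply: val_inj.
  by move=> t _; apply: val_inj => /=; case: t => -[|x s] //= _.
rewrite -(pair_big xpredT xpredT (fun i (t : n.-tuple 'I_m) => \prod_(j <- i :: t) F j)).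
by apply: eq_bigr => i _; rewrite mulr_sumr; apply: eq_bigr => t _; rewrite big_cons.
Qed.

Section MoranPressure.
Variable R : realType.

Lemma ltr_powR_lt1 (a : R) : 0 < a < 1 -> {homo powR a : t1 t2 /~ t1 < t2}.
Proof.
move=> /andP[a_gt0 a_lt1] t1 t2 t12; rewrite /powR gt_eqF // ltr_expR.
by rewrite ltr_nM2r // ln_lt0 // a_gt0.
Qed.

Lemma continuous_powR (a : R) : 0 < a -> continuous (powR a).
Proof.
move=> a_gt0 t; rewrite (_ : powR a = expR \o ( *%R^~ (ln a))); last first.
  by apply/funext => s; rewrite /powR gt_eqF.
apply: continuous_comp; last exact: continuous_expR.
exact: cvgMr_tmp cvg_id.
Qed.

Definition moran_sum (m : nat) (r : 'I_m -> R) (t : R) : R := \sum_i r i `^ t.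

Section MoranSum.
Variables (m : nat) (r : 'I_m -> R).
Hypothesis r_itv : forall i, 0 < r i < 1.
Hypothesis m_gt0 : (0 < m)%N.

Let r_gt0 i : 0 < r i. Proof. by case/andP: (r_itv i). Qed.

Lemma moran_sum_gt0 t : 0 < moran_sum r t.
Proof.
rewrite /moran_sum (bigD1 (Ordinal m_gt0)) //= ltr_wpDr ?powR_gt0 //.
by rewrite sumr_ge0 // => i _; exact: powR_ge0.
Qed.

Lemma moran_sum_decr : {homo moran_sum r : t1 t2 /~ t1 < t2}.
Proof.
move=> t1 t2 t12; apply: ltr_sum => [|i _]; last exact: ltr_powR_lt1.
by apply/hasP; exists (Ordinal m_gt0); rewrite ?mem_index_enum.
Qed.

Lemma continuous_moran_sum : continuous (moran_sum r).
Proof.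
rewrite /moran_sum; apply: continuous_big => [|i _]; first exact: add_continuous.
exact: continuous_powR (r_gt0 i).
Qed.

End MoranSum.

Lemma image_length_nondecr (g : R -> R) (a b : R) : a <= b ->
  (forall x y, a <= x -> x <= y -> y <= b -> g x <= g y) ->
  image_length g a b = g b - g a.
Proof.
move=> ab g_mono; rewrite /image_length; set E := (X in sup X).
have gab : g a <= g b by apply: g_mono.
have E_gab : E (g b - g a).
  exists b, a; split; first by rewrite ab lexx.
  by rewrite lexx ab ger0_norm ?subr_ge0.
have E_ub : ubound E (g b - g a).
  move=> _ [x [y [/andP[ax xb] [/andP[ay yb] ->]]]].
  move: (g_mono _ _ (lexx a) ax xb) (g_mono _ _ ax xb (lexx b)).
  move: (g_mono _ _ (lexx a) ay yb) (g_mono _ _ ay yb (lexx b)).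
  by rewrite ler_norml => *; apply/andP; split; lra.
apply/le_anti/andP; split; first by apply: ge_sup => //; exists (g b - g a).
by apply: sup_upper_bound => //; split; exists (g b - g a).
Qed.

Lemma cvg_invn : (fun n : nat => (n%:R : R)^-1) @ \oo --> 0.
Proof. by rewrite -cvg_shiftS; exact: cvg_harmonic. Qed.

Lemma limn_esup_ln_geometric (S : nat -> R) (q k1 k2 : R) :
  0 < q -> 0 < k1 -> 0 < k2 ->
  (forall n, (0 < n)%N -> k1 * q ^+ n <= S n <= k2 * q ^+ n) ->
  limn_esup (fun n => ((n%:R)^-1 * ln (S n))%:E) = (ln q)%:E.
Proof.
move=> q_gt0 k1_gt0 k2_gt0 S_bounds.
have rate_cvg k : (fun n : nat => ln q + ln k * (n%:R)^-1) @ \oo --> ln q.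
  rewrite -[X in _ --> X]addr0 -(mulr0 (ln k)).
  by apply: cvgD; [exact: cvg_cst | apply: cvgM; [exact: cvg_cst | exact: cvg_invn]].
apply/(cvg_limn_einf_sup _).2/cvg_EFin; first exact: nearW.
apply: (squeeze_cvgr _ (rate_cvg k1) (rate_cvg k2)); near=> n.
have n_gt0 : (0 < n)%N by near: n; exists 1%N.
have n_gt0R : 0 < (n%:R : R) by rewrite ltr0n.
have /andP[lo hi] := S_bounds n n_gt0.
have qn_gt0 : 0 < q ^+ n by rewrite exprn_gt0.
have S_gt0 : 0 < S n by apply: lt_le_trans lo; rewrite mulr_gt0.
rewrite -ler_ln ?posrE ?mulr_gt0 // lnM ?posrE // lnXn // -mulr_natr in lo.
rewrite -ler_ln ?posrE ?mulr_gt0 // lnM ?posrE // lnXn // -mulr_natr in hi.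
have scale x : n%:R * (ln q + ln x * (n%:R)^-1) = n%:R * ln q + ln x.
  by rewrite mulrDr mulrCA mulfV ?gt_eqF ?mulr1.
apply/andP; split; rewrite -(ler_pM2l n_gt0R) ?scale mulrA mulfV ?gt_eqF // mul1r; lra.
Unshelve. all: by end_near.
Qed.

Lemma powR_sandwich (k1 k2 x y t : R) : 0 < k1 -> 0 < x -> k1 * x <= y <= k2 * x ->
  expR (- (`|t| * (`|ln k1| + `|ln k2|))) * x `^ t <= y `^ t
  <= expR (`|t| * (`|ln k1| + `|ln k2|)) * x `^ t.
Proof.
move=> k1_gt0 x_gt0 /andP[lo hi].
have y_gt0 : 0 < y by apply: lt_le_trans lo; rewrite mulr_gt0.
have k2_gt0 : 0 < k2 by rewrite -(pmulr_lgt0 _ x_gt0) (lt_le_trans y_gt0).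
have ln_lo : ln k1 + ln x <= ln y by rewrite -lnM ?posrE // ler_ln ?posrE ?mulr_gt0.
have ln_hi : ln y <= ln k2 + ln x by rewrite -lnM ?posrE // ler_ln ?posrE ?mulr_gt0.
have ln_gap : `|ln y - ln x| <= `|ln k1| + `|ln k2|.
  have := ler_norm (ln k2); have := lerNnormlW (lexx `|ln k1|).
  have := normr_ge0 (ln k1); have := normr_ge0 (ln k2).
  rewrite ler_norml; lra.
have : `|t * ln y - t * ln x| <= `|t| * (`|ln k1| + `|ln k2|).
  by rewrite -mulrBr normrM ler_wpM2l.
rewrite /powR !gt_eqF // -!expRD !ler_expR ler_norml => /andP[? ?].
apply/andP; split; lra.
Qed.

Lemma powR_prod (I : Type) (s : seq I) (F : I -> R) t : (forall i, 0 <= F i) ->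
  (\prod_(i <- s) F i) `^ t = \prod_(i <- s) F i `^ t.
Proof.
move=> F_ge0; elim: s => [|i s IH]; first by rewrite !big_nil powR1.
by rewrite !big_cons powRM ?IH ?prodr_ge0.
Qed.

Section NaturalDimension.
Variables (m : nat) (fs : 'I_m -> R -> R) (a b : R) (r : 'I_m -> R) (k1 k2 : R).
Hypothesis r_itv : forall i, 0 < r i < 1.
Hypothesis m_gt0 : (0 < m)%N.
Hypothesis k1_gt0 : 0 < k1.
Hypothesis word_length : forall w : seq 'I_m,
  k1 * \prod_(i <- w) r i <= image_length (comp_word fs w) a b <= k2 * \prod_(i <- w) r i.

Let r_ge0 i : 0 <= r i. Proof. by case/andP: (r_itv i) => /ltW. Qed.

Let prod_gt0 (w : seq 'I_m) : 0 < \prod_(i <- w) r i.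
Proof. by apply: prodr_gt0 => i _; case/andP: (r_itv i). Qed.

Lemma natural_pressure_moran t : natural_pressure fs a b t = (ln (moran_sum r t))%:E.
Proof.
set K := `|t| * (`|ln k1| + `|ln k2|).
apply: (limn_esup_ln_geometric (moran_sum_gt0 r_itv m_gt0 t) (expR_gt0 (- K)) (expR_gt0 K)).
move=> n _; rewrite /moran_sum -sum_tuple_prod !mulr_sumr.
have word_pow (w : n.-tuple 'I_m) := powR_sandwich t k1_gt0 (prod_gt0 w) (word_length w).
by apply/andP; split; apply: ler_sum => w _; rewrite -powR_prod //; case/andP: (word_pow w).
Qed.

Lemma natural_dimension_moran d :
  cplifs_interval fs a b -> moran_sum r d = 1 -> natural_dimension fs d.
Proof.
move=> Iab rd; exists a, b; split => //; split => [|t].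
  by rewrite natural_pressure_moran rd ln1.
rewrite natural_pressure_moran => /eqP; rewrite eqe ln_eq0 ?moran_sum_gt0 // -rd => /eqP.
exact/dec_inj/le_nmono/moran_sum_decr.
Qed.

End NaturalDimension.

Lemma attractor_set1_fixed (m : nat) (fs : 'I_m -> R -> R) (phi : R) :
  is_attractor fs [set phi] -> forall k, fs k phi = phi.
Proof.
move=> [_ [_ attr_eq]] k.
suff : (\bigcup_(j in [set: 'I_m]) (fs j @` [set phi])) (fs k phi) by rewrite -attr_eq.
by exists k => //; exists phi.
Qed.

End MoranPressure.

Section Example.
Context {R : realType}.

Definition slope_pos (i : 'I_2) : R := if val i == 0%N then 1 / 5 else 1 / 3.
Definition slope_neg (i : 'I_2) : R := if val i == 0%N then 2 / 5 else 1 / 3.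

Lemma slope_pos_itv i : 0 < slope_pos i < 1.
Proof. by rewrite /slope_pos; case: ifP => _; apply/andP; split; lra. Qed.

Lemma slope_neg_itv i : 0 < slope_neg i < 1.
Proof. by rewrite /slope_neg; case: ifP => _; apply/andP; split; lra. Qed.

Lemma prod_slope_pos_gt0 (w : seq 'I_2) : 0 < \prod_(i <- w) slope_pos i.
Proof. by apply: prodr_gt0 => i _; case/andP: (slope_pos_itv i). Qed.

Lemma prod_slope_neg_gt0 (w : seq 'I_2) : 0 < \prod_(i <- w) slope_neg i.
Proof. by apply: prodr_gt0 => i _; case/andP: (slope_neg_itv i). Qed.

Lemma moran_sum_slope_pos t : moran_sum slope_pos t = (1 / 5) `^ t + (1 / 3) `^ t.
Proof. by rewrite /moran_sum big_ord_recl big_ord1. Qed.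

Lemma moran_sum_slope_neg t : moran_sum slope_neg t = (2 / 5) `^ t + (1 / 3) `^ t.
Proof. by rewrite /moran_sum big_ord_recl big_ord1. Qed.

Lemma moran_sum_slope_neg_eq1 : exists d, moran_sum slope_neg d = 1.
Proof.
have ms0 : moran_sum slope_neg 0 = 2 by rewrite moran_sum_slope_neg !powRr0.
have ms1 : moran_sum slope_neg 1 = 11 / 15 by rewrite moran_sum_slope_neg !powRr1; lra.
have ms_cont := continuous_moran_sum slope_neg_itv.
have [|d _ ms_d] := IVT (v := 1) ler01 (continuous_subspaceT ms_cont); last by exists d.
by rewrite ms0 ms1 ge_min le_max; apply/andP; split; apply/orP; [right|left]; lra.
Qed.

Lemma moran_sum_slope_pos_lt_neg t : 0 < t -> moran_sum slope_pos t < moran_sum slope_neg t.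
Proof.
move=> t_gt0; rewrite moran_sum_slope_pos moran_sum_slope_neg ltrD2r.
by rewrite gt0_ltr_powR // ?nnegrE; lra.
Qed.

Lemma comp_word_famFhat (eps : R) (w : seq 'I_2) : 0 <= eps ->
  exists2 c, 0 <= c & forall x, 0 <= x ->
    comp_word (famFhat eps) w x = \prod_(i <- w) slope_pos i * x + c.
Proof.
move=> eps_ge0; elim: w => [|i w [c c_ge0 IH]].
  by exists 0 => // x _; rewrite big_nil mul1r addr0.
rewrite /famFhat /=; case: ifP => i0.
  exists (1 / 5 * c); first lra.
  move=> x x_ge0; rewrite IH // big_cons /slope_pos i0 /f1.
  by rewrite ltNge addr_ge0 ?mulr_ge0 ?(ltW (prod_slope_pos_gt0 w)) //=; lra.
exists (1 / 3 * c + eps); first lra.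
by move=> x x_ge0; rewrite IH // big_cons /slope_pos i0 /f2hat; lra.
Qed.

Lemma comp_word_famF (w : seq 'I_2) x : comp_word (@famF R) w x =
  (if x < 0 then \prod_(i <- w) slope_neg i else \prod_(i <- w) slope_pos i) * x.
Proof.
elim: w => [|i w IH]; first by rewrite /= !big_nil if_same mul1r.
have pos_gt0 := prod_slope_pos_gt0 w; have neg_gt0 := prod_slope_neg_gt0 w.
rewrite /= IH !big_cons /famF [slope_pos i]/slope_pos [slope_neg i]/slope_neg.
case: ifP => _; last by rewrite /f2; case: (x < 0); rewrite mulrA.
by rewrite /f1; case x0 : (x < 0); rewrite pmulr_rlt0 // x0 mulrA.
Qed.

Lemma image_length_famFhat (eps L : R) (w : seq 'I_2) : 0 <= eps -> 0 <= L ->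
  image_length (comp_word (famFhat eps) w) 0 L = L * \prod_(i <- w) slope_pos i.
Proof.
move=> eps_ge0 L_ge0; have [c _ wx] := comp_word_famFhat w eps_ge0.
have prod_gt0 := prod_slope_pos_gt0 w.
rewrite image_length_nondecr // => [|x y x_ge0 xy _].
  by rewrite !wx // mulr0 add0r addrK mulrC.
by rewrite !wx ?(le_trans x_ge0) // lerD2r ler_pM2l.
Qed.

Lemma image_length_famF (w : seq 'I_2) :
  image_length (comp_word (@famF R) w) (- 2^-1) 2^-1
  = (\prod_(i <- w) slope_neg i + \prod_(i <- w) slope_pos i) / 2.
Proof.
have pos_gt0 := prod_slope_pos_gt0 w; have neg_gt0 := prod_slope_neg_gt0 w.
have half_gt0 : 0 < 2^-1 :> R by rewrite invr_gt0 ltr0n.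
have word_mono x y : x <= y -> comp_word (@famF R) w x <= comp_word (@famF R) w y.
  move=> xy; rewrite !comp_word_famF; case: ifP => x0; case: ifP => y0.
  - by rewrite ler_pM2l.
  - by apply: (@le_trans _ _ 0); [rewrite pmulr_rle0 ?ltW | rewrite pmulr_rge0 // leNgt y0].
  - by move: x0; rewrite (le_lt_trans xy y0).
  - by rewrite ler_pM2l.
rewrite image_length_nondecr => [||x y _ xy _]; last exact: word_mono.
  by rewrite !comp_word_famF ltNge ltW //= oppr_lt0 half_gt0; lra.
by rewrite (le_trans _ (ltW half_gt0)) // oppr_le0 ltW.
Qed.

Lemma image_length_famF_bounds (w : seq 'I_2) :
  2^-1 * \prod_(i <- w) slope_neg i <= image_length (comp_word (@famF R) w) (- 2^-1) 2^-1
  <= 1 * \prod_(i <- w) slope_neg i.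
Proof.
have pos_le_neg : \prod_(i <- w) slope_pos i <= \prod_(i <- w) slope_neg i.
  apply: ler_prod => i _; case/andP: (slope_pos_itv i) => /ltW -> _ /=.
  by rewrite /slope_pos /slope_neg; case: ifP => _; lra.
have pos_gt0 := prod_slope_pos_gt0 w.
by rewrite image_length_famF; apply/andP; split; lra.
Qed.

Lemma cplifs_interval_famFhat (eps : R) : 0 < eps ->
  cplifs_interval (famFhat eps) 0 (3 / 2 * eps).
Proof.
move=> eps_gt0; right; split.
  move=> [phi /attractor_set1_fixed phi_fixed].
  have := phi_fixed ord0; have := phi_fixed (@Ordinal 2 1 isT).
  by rewrite /famFhat /= /f1 /f2hat; case: ifP => _; lra.
split.
  split=> [|k x /andP[x_ge0 x_le]]; first lra.
  rewrite /famFhat; case: ifP => _; rewrite /f1 /f2hat ?ltNge ?x_ge0 /=;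
    by apply/andP; split; lra.
move=> c d [cd cd_inv]; split.
  have := cd_inv ord0 c; rewrite lexx cd /famFhat /= /f1 => /(_ isT) /andP[+ _].
  by case: ifP => _; lra.
have := cd_inv (@Ordinal 2 1 isT) d; rewrite lexx cd /famFhat /= /f2hat.
by move=> /(_ isT) /andP[_]; lra.
Qed.

Lemma cplifs_interval_famF : cplifs_interval (@famF R) (- 2^-1) 2^-1.
Proof.
left; exists 0; rewrite sub0r add0r; split => //; split; first by exists 0.
split; first exact: compact_set1.
have f_0 k : famF k 0 = 0 :> R by rewrite /famF; case: ifP; rewrite /f1 /f2 ?ltxx mulr0.
apply/seteqP; split=> [x ->|x [k _ [y -> <-]]]; last exact: f_0.
by exists ord0 => //; exists 0; rewrite ?f_0.
Qed.

End Example.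

Theorem mainTheorem6 (R : realType) (s0 : R) :
  0 < s0 -> (1 / 3 : R) `^ s0 + (1 / 5 : R) `^ s0 = 1 ->
  (forall eps : R, 0 < eps -> natural_dimension (famFhat eps) s0) /\
  (exists d : R, natural_dimension (@famF R) d /\ s0 < d).
Proof.
move=> s0_gt0 s0_eq.
have pos_s0 : moran_sum slope_pos s0 = 1 by rewrite moran_sum_slope_pos addrC.
split=> [eps eps_gt0|].
  have L_gt0 : 0 < 3 / 2 * eps by rewrite mulr_gt0.
  apply: (natural_dimension_moran (k2 := 3 / 2 * eps) slope_pos_itv isT L_gt0 _
    (cplifs_interval_famFhat eps_gt0) pos_s0).
  by move=> w; rewrite image_length_famFhat ?lexx ?ltW.
have [d neg_d] := @moran_sum_slope_neg_eq1 R.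
have half_gt0 : 0 < 2^-1 :> R by rewrite invr_gt0 ltr0n.
exists d; split.
  exact: (natural_dimension_moran slope_neg_itv isT half_gt0
    image_length_famF_bounds cplifs_interval_famF neg_d).
rewrite ltNge -(le_nmono (moran_sum_decr slope_neg_itv isT)) neg_d -pos_s0 -ltNge.
exact: moran_sum_slope_pos_lt_neg.
Qed.
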